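(* For any American type option, the equal risk price with commitment $p^*_c$ is smaller than or equal to the equal risk price without commitment $p^*_{nc}$ (assuming both exist).
   Context: Discrete-time setting: filtered probability space $(\Omega,\mathcal{F},(\mathcal{F}_t),\mathbb{P})$, zero interest rate, risky asset with $S_k:=S_{t_k}$, trading dates $t_0<\dots<t_{K-1}<t_K=T$, $\Delta S_{k+1}=S_{k+1}-S_k$, adapted auxiliary process $Y_k$. An exercise time is a stopping time $\tau:\Omega\to\{0,\dots,K\}$ with $\{\tau=k\}\in\mathcal{F}_{t_k}$; the payoff is $F(S_\tau,Y_\tau)=\sum_{k=0}^K\mathbf{1}\{\tau=k\}F_k(S_k,Y_k)$. The set $\bar{\mathcal{X}}_\tau(p_0)$ consists of wealth processes defined for every exercise time $\tau$ by $X^\tau_0=p_0$ and $X^\tau_{k+1}(\tau)=X^\tau_k(\tau)+(\xi_k\mathbf{1}\{\tau>k\}+\sum_{i=0}^k\hat\xi^i_k\mathbf{1}\{\tau=i\})\Delta S_{k+1}$, where $\xi_k,\hat\xi^i_k$ are $\mathcal{F}_{t_k}$-measurable (not depending on $\tau$). Risk measures $\rho^w,\rho^b$ (on random costs) are certainty equivalents ($\rho(c)=c$ for $c\in\mathbb{R}$), monotone, and strictly monotone with respect to certain amounts. Define $\varrho^w(p_0,\tau)=\inf_{X^\tau\in\bar{\mathcal{X}}_\tau(p_0)}\rho^w(F(S_\tau,Y_\tau)-X^\tau_K(\tau))$, $\varrho^b(p_0,\tau)=\inf_{X^\tau\in\bar{\mathcal{X}}_\tau(-p_0)}\rho^b(-F(S_\tau,Y_\tau)-X^\tau_K(\tau))$,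 $\varrho^w_\tau(p_0)=\inf_{X^\tau\in\bar{\mathcal{X}}_\tau(p_0)}\sup_\tau\rho^w(F(S_\tau,Y_\tau)-X^\tau_K(\tau))$ and $\varrho^b_\tau(p_0)=\inf_{X^\tau\in\bar{\mathcal{X}}_\tau(-p_0)}\inf_\tau\rho^b(-F(S_\tau,Y_\tau)-X^\tau_K(\tau))$. The ERP with commitment is the unique $p_0^*$ for which some $\tau^*$ satisfies $\varrho^w(p_0^*,\tau^* )=\varrho^b(p_0^*,\tau^* )\in\mathbb{R}$ and $\tau^*\in\arg\min_\tau\varrho^b(p_0^*,\tau)$. The ERP without commitment is the unique $p_0^*$ with $\varrho^w_\tau(p_0^* )=\varrho^b_\tau(p_0^* )\in\mathbb{R}$. *)

From HB Require Import structures.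
From mathcomp Require Import all_boot all_order all_algebra.
From mathcomp Require Import all_classical all_reals all_analysis.
Set Implicit Arguments. Unset Strict Implicit. Unset Printing Implicit Defensive.
Import Order.TTheory GRing.Theory Num.Theory.
Local Open Scope classical_set_scope.
Local Open Scope ring_scope.

Definition Fmeas (d : measure_display) (Omega : measurableType d)
  (d' : measure_display) (T : measurableType d')
  (G : set (set Omega)) (f : Omega -> T) : Prop :=
  forall B : set T, measurable B -> G (f @^-1` B).

(* (F k)_k, indexed by the trading dates t_0 < ... < t_K, is a filtration *)
Definition filtration (d : measure_display) (Omega : measurableType d)
  (F : nat -> set (set Omega)) : Prop :=
  forall k, [/\ sigma_algebra setT (F k), F k `<=` measurable & F k `<=` F k.+1].

Definition exercise_time (d : measure_display) (Omega : measurableType d)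
  (F : nat -> set (set Omega)) (K : nat) (tau : Omega -> nat) : Prop :=
  (forall w, (tau w <= K)%N) /\
  (forall k, (k <= K)%N -> F k [set w | tau w = k]).

Definition admissible (d : measure_display) (Omega : measurableType d)
  (R : realType) (F : nat -> set (set Omega)) (K : nat)
  (xi : nat -> Omega -> R) (xih : nat -> nat -> Omega -> R) : Prop :=
  forall k, (k < K)%N ->
    Fmeas (F k) (xi k) /\ (forall i, (i <= k)%N -> Fmeas (F k) (xih i k)).

Fixpoint wealth (Omega : Type) (R : realType) (S : nat -> Omega -> R) (p0 : R)
  (xi : nat -> Omega -> R) (xih : nat -> nat -> Omega -> R)
  (tau : Omega -> nat) (k : nat) (w : Omega) : R :=
  match k with
  | 0 => p0
  | k'.+1 => wealth S p0 xi xih tau k' w +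
      ((if (k' < tau w)%N then xi k' w else 0) +
       \sum_(i < k'.+1) (if tau w == i then xih i k' w else 0)) *
      (S k'.+1 w - S k' w)
  end.

Definition payoff (Omega : Type) (R : realType) (U : Type)
  (Fp : nat -> R -> U -> R) (S : nat -> Omega -> R) (Y : nat -> Omega -> U)
  (K : nat) (tau : Omega -> nat) (w : Omega) : R :=
  \sum_(k < K.+1) (if tau w == k then Fp k (S k w) (Y k w) else 0).

(* risk measure on random costs: certainty equivalent, monotone,
   strictly monotone with respect to certain amounts *)
Definition risk_measure (d : measure_display) (Omega : measurableType d)
  (R : realType) (P : probability Omega R) (rho : (Omega -> R) -> \bar R) : Prop :=
  [/\ (forall c : R, rho (fun _ => c) = c%:E),
      (forall X Z : Omega -> R, {ae P, forall w, (X w <= Z w)%R} -> (rho X <= rho Z)%E) &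
      (forall (X : Omega -> R) (c : R), (0 < c)%R -> rho X \is a fin_num ->
         (rho X < rho (fun w => (X w + c)%R))%E)].

Section Values.
Local Open Scope ereal_scope.
Context (d : measure_display) (Omega : measurableType d) (R : realType)
  (F : nat -> set (set Omega)) (K : nat) (S : nat -> Omega -> R)
  (U : Type) (Y : nat -> Omega -> U) (Fp : nat -> R -> U -> R).

Definition varrho_w (rhow : (Omega -> R) -> \bar R) (p0 : R) (tau : Omega -> nat) : \bar R :=
  ereal_inf [set e | exists xi xih, admissible F K xi xih /\
    e = rhow (fun w => (payoff Fp S Y K tau w - wealth S p0 xi xih tau K w)%R)].

Definition varrho_b (rhob : (Omega -> R) -> \bar R) (p0 : R) (tau : Omega -> nat) : \bar R :=
  ereal_inf [set e | exists xi xih, admissible F K xi xih /\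
    e = rhob (fun w => (- payoff Fp S Y K tau w - wealth S (- p0) xi xih tau K w)%R)].

Definition varrho_w_nc (rhow : (Omega -> R) -> \bar R) (p0 : R) : \bar R :=
  ereal_inf [set e | exists xi xih, admissible F K xi xih /\
    e = ereal_sup [set v | exists tau, exercise_time F K tau /\
          v = rhow (fun w => (payoff Fp S Y K tau w - wealth S p0 xi xih tau K w)%R)]].

Definition varrho_b_nc (rhob : (Omega -> R) -> \bar R) (p0 : R) : \bar R :=
  ereal_inf [set e | exists xi xih, admissible F K xi xih /\
    e = ereal_inf [set v | exists tau, exercise_time F K tau /\
          v = rhob (fun w => (- payoff Fp S Y K tau w - wealth S (- p0) xi xih tau K w)%R)]].

Definition erp_c_cond (rhow rhob : (Omega -> R) -> \bar R) (p : R) : Prop :=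
  exists tau, exercise_time F K tau /\
    varrho_w rhow p tau = varrho_b rhob p tau /\
    varrho_b rhob p tau \is a fin_num /\
    (forall tau', exercise_time F K tau' -> varrho_b rhob p tau <= varrho_b rhob p tau').

Definition erp_nc_cond (rhow rhob : (Omega -> R) -> \bar R) (p : R) : Prop :=
  varrho_w_nc rhow p = varrho_b_nc rhob p /\ varrho_b_nc rhob p \is a fin_num.

Definition is_erp_c rhow rhob (p : R) : Prop :=
  erp_c_cond rhow rhob p /\ forall q, erp_c_cond rhow rhob q -> q = p.
Definition is_erp_nc rhow rhob (p : R) : Prop :=
  erp_nc_cond rhow rhob p /\ forall q, erp_nc_cond rhow rhob q -> q = p.
End Values.

(** If the no-commitment price [q] were strictly below the commitment price [p],
    take the exercise time [tau] optimal at [p].  The writer's risk [varrho^w(., tau)]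
    decreases and the buyer's risk [varrho^b(., tau)] increases with the price, while
    fixing [tau] can only help the writer and hurt the buyer; this gives the cycle
    [varrho^b(q,tau) <= varrho^b(p,tau) = varrho^w(p,tau) <= varrho^w(q,tau)
     <= varrho^w_tau(q) = varrho^b_tau(q) <= varrho^b(q,tau)].
    All terms are therefore equal, so [q] is also an equal risk price with commitment,
    and uniqueness forces [q = p]. *)
From HB Require Import structures.
From mathcomp Require Import all_boot all_order all_algebra.
From mathcomp Require Import all_classical all_reals all_analysis.
Set Implicit Arguments. Unset Strict Implicit. Unset Printing Implicit Defensive.
Import Order.TTheory GRing.Theory Num.Theory.
Local Open Scope ring_scope.

Lemma wealth_shift (Omega : Type) (R : realType) (S : nat -> Omega -> R) p0
  xi xih tau k w :
  wealth S p0 xi xih tau k w = p0 + wealth S 0 xi xih tau k w.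
Proof.
elim: k => [|k IH] /=; first by rewrite addr0.
by rewrite IH addrA.
Qed.

Lemma risk_measure_le (d : measure_display) (Omega : measurableType d)
  (R : realType) (P : probability Omega R) (rho : (Omega -> R) -> \bar R) :
  risk_measure P rho ->
  forall X Z : Omega -> R, (forall w, X w <= Z w) -> (rho X <= rho Z)%E.
Proof. by move=> [_ mono _] X Z XZ; apply: mono; apply: aeW. Qed.

Section ResidualRisk.
Local Open Scope ereal_scope.
Context (d : measure_display) (Omega : measurableType d) (R : realType)
  (F : nat -> set (set Omega)) (K : nat) (S : nat -> Omega -> R).

Definition residual_risk (rho : (Omega -> R) -> \bar R) (C : Omega -> R)
  (p0 : R) (tau : Omega -> nat) : \bar R :=
  ereal_inf [set e | exists xi xih, admissible F K xi xih /\
    e = rho (fun w => (C w - wealth S p0 xi xih tau K w)%R)].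

Lemma residual_risk_antitone (rho : (Omega -> R) -> \bar R) C tau p q :
  (forall X Z : Omega -> R, (forall w, X w <= Z w)%R -> rho X <= rho Z) ->
  (p <= q)%R -> residual_risk rho C q tau <= residual_risk rho C p tau.
Proof.
move=> rho_le pq; apply: le_ereal_inf_tmp => _ [xi [xih [adm ->]]].
apply: (@le_trans _ _ (rho (fun w => (C w - wealth S q xi xih tau K w)%R))).
  by apply: ereal_inf_lbound; exists xi, xih.
apply: rho_le => w.
by rewrite (wealth_shift _ p) (wealth_shift _ q) lerD2l lerN2 lerD2r.
Qed.

Context (U : Type) (Y : nat -> Omega -> U) (Fp : nat -> R -> U -> R).

Lemma varrho_wE rhow p tau :
  varrho_w F K S Y Fp rhow p tau = residual_risk rhow (payoff Fp S Y K tau) p tau.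
Proof. by []. Qed.

Lemma varrho_bE rhob p tau :
  varrho_b F K S Y Fp rhob p tau =
  residual_risk rhob (fun w => - payoff Fp S Y K tau w)%R (- p) tau.
Proof. by []. Qed.

Lemma varrho_w_le_nc rhow p tau : exercise_time F K tau ->
  varrho_w F K S Y Fp rhow p tau <= varrho_w_nc F K S Y Fp rhow p.
Proof.
move=> Etau; apply: le_ereal_inf_tmp => _ [xi [xih [adm ->]]].
apply: le_trans (_ : rhow _ <= _); first by apply: ereal_inf_lbound; exists xi, xih.
by apply: ereal_sup_ubound; exists tau.
Qed.

Lemma varrho_b_nc_le rhob p tau : exercise_time F K tau ->
  varrho_b_nc F K S Y Fp rhob p <= varrho_b F K S Y Fp rhob p tau.
Proof.
move=> Etau; apply: le_ereal_inf_tmp => _ [xi [xih [adm ->]]].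
apply: le_trans (_ : ereal_inf _ <= _); first by apply: ereal_inf_lbound; exists xi, xih.
by apply: ereal_inf_lbound; exists tau.
Qed.

Lemma erp_c_cond_below (rhow rhob : (Omega -> R) -> \bar R) p q :
  (forall X Z : Omega -> R, (forall w, X w <= Z w)%R -> rhow X <= rhow Z) ->
  (forall X Z : Omega -> R, (forall w, X w <= Z w)%R -> rhob X <= rhob Z) ->
  erp_c_cond F K S Y Fp rhow rhob p -> erp_nc_cond F K S Y Fp rhow rhob q ->
  (q <= p)%R -> erp_c_cond F K S Y Fp rhow rhob q.
Proof.
move=> rhow_le rhob_le [tau [Etau [Ewb _]]] [Enc finnc] qp.
have b_qp : varrho_b F K S Y Fp rhob q tau <= varrho_b F K S Y Fp rhob p tau.
  by rewrite !varrho_bE; apply: residual_risk_antitone; rewrite ?lerN2.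
have w_qp : varrho_w F K S Y Fp rhow p tau <= varrho_w F K S Y Fp rhow q tau.
  by rewrite !varrho_wE; apply: residual_risk_antitone.
have b_le_w : varrho_b F K S Y Fp rhob q tau <= varrho_w F K S Y Fp rhow q tau.
  by rewrite (le_trans b_qp) // -Ewb.
have w_le_nc := varrho_w_le_nc rhow q Etau.
have nc_le_b := varrho_b_nc_le rhob q Etau.
have b_nc : varrho_b F K S Y Fp rhob q tau = varrho_b_nc F K S Y Fp rhob q.
  by apply/le_anti; rewrite nc_le_b -Enc (le_trans b_le_w).
exists tau; split => //; split; last split.
- by apply/le_anti; rewrite b_le_w andbT (le_trans w_le_nc) // Enc b_nc.
- by rewrite b_nc finnc.
- by move=> tau' Etau'; rewrite b_nc; exact: varrho_b_nc_le.
Qed.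

End ResidualRisk.

Theorem lemma2 (d : measure_display) (Omega : measurableType d) (R : realType)
  (P : probability Omega R) (F : nat -> set (set Omega)) (K : nat)
  (S : nat -> Omega -> R)
  (dU : measure_display) (U : measurableType dU) (Y : nat -> Omega -> U)
  (Fp : nat -> R -> U -> R)
  (rhow rhob : (Omega -> R) -> \bar R)
  (pc pnc : R) :
  filtration F ->
  (forall k, Fmeas (F k) (S k)) ->
  (forall k, Fmeas (F k) (Y k)) ->
  risk_measure P rhow -> risk_measure P rhob ->
  is_erp_c F K S Y Fp rhow rhob pc ->
  is_erp_nc F K S Y Fp rhow rhob pnc ->
  pc <= pnc.
Proof.
move=> _ _ _ /risk_measure_le rhow_le /risk_measure_le rhob_le
  [erp_pc uniq_c] [erp_pnc _].
rewrite leNgt; apply/negP => lt_pnc_pc.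
have erp_c_pnc : erp_c_cond F K S Y Fp rhow rhob pnc :=
  erp_c_cond_below rhow_le rhob_le erp_pc erp_pnc (ltW lt_pnc_pc).
by rewrite (uniq_c _ erp_c_pnc) ltxx in lt_pnc_pc.
Qed.
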